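(* Let $I$ be a real interval with $[-1,0]\subseteq I\subseteq\mathbb{R}_-$ and let $f\colon I^n\to\mathbb{R}$ be nonconstant. The following are equivalent: (i) $f$ is a quasi-Lovász extension and there exists $A\subseteq[n]$ with $f_0(-\mathbf{1}_A)\neq0$; (ii) $f$ is comonotonically modular and $f_0$ is weakly homogeneous; (ii') $f$ is invariant under horizontal max-differences and $f_0$ is weakly homogeneous; (iii) there exists a nondecreasing function $\varphi_f\colon I\to\mathbb{R}$ with $\varphi_f(0)=0$ and $\varphi_f(-1)=-1$ such that $f=L^-_f\circ\varphi_f$, i.e. $f(\mathbf{x})=L^-_f(\varphi_f(x_1),\ldots,\varphi_f(x_n))$ for all $\mathbf{x}\in I^n$, where $L^-_f$ denotes the unique Lovász extension $L\colon\mathbb{R}^n\to\mathbb{R}$ satisfying $L(-\mathbf{1}_A)=f(-\mathbf{1}_A)$ for all $A\subseteq[n]$.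
   Context: Notation: $[n]=\{1,\ldots,n\}$; $S_n$ the permutations of $[n]$; $\mathbf{1}_A$ is the indicator tuple of $A\subseteq[n]$, $\mathbf{0}=\mathbf{1}_\varnothing$; for a function $g$, $g_0=g-g(\mathbf{0})$. For $\sigma\in S_n$, $\mathbb{R}^n_\sigma=\{\mathbf{x}: x_{\sigma(1)}\leq\cdots\leq x_{\sigma(n)}\}$, $A^\uparrow_\sigma(i)=\{\sigma(i),\ldots,\sigma(n)\}$, $A^\uparrow_\sigma(n+1)=\varnothing$. The Lovász extension $L_\psi\colon\mathbb{R}^n\to\mathbb{R}$ of $\psi\colon\{0,1\}^n\to\mathbb{R}$ is the function whose restriction to each $\mathbb{R}^n_\sigma$ is the unique affine function agreeing with $\psi$ at the points $\mathbf{1}_{A^\uparrow_\sigma(k)}$, $k\in[n+1]$; a Lovász extension is any such $L_\psi$ (a Lovász extension is uniquely determined by, and can be prescribed arbitrarily through, its values at the points $-\mathbf{1}_A$, $A\subseteq[n]$). A quasi-Lovász extension is $f(\mathbf{x})=L(\varphi(x_1),\ldots,\varphi(x_n))$ with $L$ a Lovász extension and $\varphi\colon I\to\mathbb{R}$ nondecreasing, $\varphi(0)=0$. Comonotonic: $\mathbf{x},\mathbf{x}'\in I^n\cap\mathbb{R}^n_\sigma$ for some $\sigma$. Comonotonically modular: $f(\mathbf{x})+f(\mathbf{x}')=f(\mathbf{x}\wedge\mathbf{x}')+f(\mathbf{x}\vee\mathbf{x}')$ for comonotonic $\mathbf{x},\mathbf{x}'$ ($\wedge,\vee$ componentwise).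 For $c\leq0$, $[\mathbf{x}]^c$ has $i$th component $0$ if $x_i\geq c$ and $x_i$ otherwise, and $\mathbf{x}\vee c$ has components $\max(x_i,c)$; $f$ is invariant under horizontal max-differences if $f(\mathbf{x})-f(\mathbf{x}\vee c)=f([\mathbf{x}]^c)-f([\mathbf{x}]^c\vee c)$ for all $\mathbf{x}\in I^n$, $c\in I$. A function $g\colon I^n\to\mathbb{R}$ ($I\subseteq\mathbb{R}_-$) is weakly homogeneous if there is a nondecreasing $\phi\colon I\to\mathbb{R}$ with $\phi(0)=0$ and $g(x\mathbf{1}_A)=-\phi(x)g(-\mathbf{1}_A)$ for all $x\in I$, $A\subseteq[n]$. *)

From HB Require Import structures.
From mathcomp Require Import all_boot all_order all_algebra all_fingroup.
Set Implicit Arguments. Unset Strict Implicit. Unset Printing Implicit Defensive.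
Import Order.TTheory GRing.Theory Num.Theory.
Local Open Scope ring_scope.

Section Defs.
Variables (R : realFieldType) (n : nat).

(* vectors of R^n are functions 'I_n -> R; index k : 'I_n stands for k+1 *)
Definition vec := 'I_n -> R.

Definition is_interval (I : R -> Prop) : Prop :=
  forall x y z, I x -> I z -> x <= y -> y <= z -> I y.

Definition in_In (I : R -> Prop) (x : vec) : Prop := forall i, I (x i).

Definition ind (A : {set 'I_n}) : vec := fun i => if i \in A then 1 else 0.
Definition negind (A : {set 'I_n}) : vec := fun i => - ind A i.
Definition zerov : vec := fun _ => 0.

Definition in_sigma (s : 'S_n) (x : vec) : Prop :=
  forall i j : 'I_n, (i <= j)%N -> x (s i) <= x (s j).

(* A^up_sigma(k+1) = {sigma(k+1),...,sigma(n)} for k = 0..n (k = n gives empty) *)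
Definition Aup (s : 'S_n) (k : nat) : {set 'I_n} :=
  [set s i | i : 'I_n & (k <= i)%N].

(* L is the Lovasz extension of psi : {0,1}^n -> R (identified with subsets):
   on each R^n_sigma it coincides with an affine map agreeing with psi at
   the points 1_{A^up_sigma(k)}, k in [n+1]. *)
Definition lovasz_ext_of (psi : {set 'I_n} -> R) (L : vec -> R) : Prop :=
  forall s : 'S_n, exists (a : vec) (c : R),
    (forall x, in_sigma s x -> L x = c + \sum_(i < n) a i * x i) /\
    (forall k, (k <= n)%N -> c + \sum_(i < n) a i * ind (Aup s k) i = psi (Aup s k)).

Definition is_lovasz (L : vec -> R) : Prop := exists psi, lovasz_ext_of psi L.

Definition nondecr_on (I : R -> Prop) (phi : R -> R) : Prop :=
  forall x y, I x -> I y -> x <= y -> phi x <= phi y.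

Definition compv (phi : R -> R) (x : vec) : vec := fun i => phi (x i).

Definition quasi_lovasz (I : R -> Prop) (f : vec -> R) : Prop :=
  exists (L : vec -> R) (phi : R -> R),
    is_lovasz L /\ nondecr_on I phi /\ phi 0 = 0 /\
    forall x, in_In I x -> f x = L (compv phi x).

Definition zeroed (f : vec -> R) : vec -> R := fun x => f x - f zerov.

Definition vmin (x y : vec) : vec := fun i => Num.min (x i) (y i).
Definition vmax (x y : vec) : vec := fun i => Num.max (x i) (y i).

Definition comonotonic (I : R -> Prop) (x y : vec) : Prop :=
  in_In I x /\ in_In I y /\ exists s : 'S_n, in_sigma s x /\ in_sigma s y.

Definition comon_modular (I : R -> Prop) (f : vec -> R) : Prop :=
  forall x y, comonotonic I x y -> f x + f y = f (vmin x y) + f (vmax x y).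

Definition cut (c : R) (x : vec) : vec := fun i => if c <= x i then 0 else x i.
Definition maxc (x : vec) (c : R) : vec := fun i => Num.max (x i) c.

Definition inv_hmaxdiff (I : R -> Prop) (f : vec -> R) : Prop :=
  forall x c, in_In I x -> I c ->
    f x - f (maxc x c) = f (cut c x) - f (maxc (cut c x) c).

Definition scalev (t : R) (x : vec) : vec := fun i => t * x i.

Definition weakly_homogeneous (I : R -> Prop) (g : vec -> R) : Prop :=
  exists phi : R -> R, nondecr_on I phi /\ phi 0 = 0 /\
    forall x (A : {set 'I_n}), I x ->
      g (scalev x (ind A)) = - phi x * g (negind A).

Definition nonconstant_on (I : R -> Prop) (f : vec -> R) : Prop :=
  exists x y, in_In I x /\ in_In I y /\ f x <> f y.

End Defs.

Arguments ind {R n} A.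
Arguments negind {R n} A.
Arguments zerov {R n}.
Arguments Aup {n} s k.

(* A Lovasz extension L is affine on each cone R^n_sigma and is determined by
   its values at the points -1_A. Composing with a nondecreasing phi keeps
   comonotonic vectors in a common cone, so L o phi is comonotonically modular,
   and f_0 is weakly homogeneous because L - L(0) is positively homogeneous.
   Comonotonic modularity gives invariance under horizontal max-differences, and
   such a function is determined by its values at the points t 1_A: cutting x at
   its largest nonzero entry shrinks the support. Hence under (ii') f agrees with
   L^-_f o phi, phi being the weak-homogeneity function, which satisfies
   phi(-1) = -1 because nonconstancy forces some f_0(-1_A) <> 0. Conversely, in
   (i) dividing phi by -phi(-1) > 0 gives (iii). *)

From HB Require Import structures.
From mathcomp Require Import all_boot all_order all_algebra all_fingroup.
From Stdlib Require Import FunctionalExtensionality.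
Import Order.TTheory GRing.Theory Num.Theory.
Set Implicit Arguments. Unset Strict Implicit.
Local Open Scope ring_scope.

Section LovaszExtension.
Variables (R : realFieldType) (n : nat).
Local Notation vec := (vec R n).

Lemma exists_sorting_perm (x : vec) : exists s : 'S_n, in_sigma s x.
Proof.
case: n x => [|m] x; first by exists 1%g => -[].
pose r i j := x i <= x j.
have r_trans : transitive r by move=> ???; exact: le_trans.
pose ss := sort r (enum 'I_m.+1).
have size_ss : size ss = m.+1 by rewrite size_sort size_enum_ord.
have uniq_ss : uniq ss by rewrite sort_uniq enum_uniq.
have nth_inj : injective (fun i : 'I_m.+1 => nth ord0 ss i).
  by move=> i j /eqP; rewrite nth_uniq ?size_ss // => /eqP /val_inj.
exists (perm nth_inj) => i j le_ij; rewrite !permE.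
apply: (sorted_leq_nth r_trans) => //; first by move=> ?; exact: lexx.
- by apply: sort_sorted => ??; exact: le_total.
- by rewrite inE size_ss.
- by rewrite inE size_ss.
Qed.

Lemma in_sigma_compv (s : 'S_n) (x : vec) (G : R -> R) :
  (forall i j, x i <= x j -> G (x i) <= G (x j)) -> in_sigma s x ->
  in_sigma s (compv G x).
Proof. by move=> G_mono x_s i j le_ij; apply/G_mono/x_s. Qed.

Definition affine_on (s : 'S_n) (g : vec -> R) : Prop :=
  exists (a : vec) (c : R), forall x, in_sigma s x -> g x = c + \sum_(i < n) a i * x i.

Definition piecewise_affine (g : vec -> R) : Prop := forall s, affine_on s g.

Lemma in_sigma_ind_Aup (s : 'S_n) k : in_sigma s (ind (Aup s k) : vec).
Proof.
move=> i j le_ij; rewrite /ind /Aup !mem_imset ?inE //; try exact: perm_inj.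
case: (leqP k i) => [le_ki|_]; first by rewrite (leq_trans le_ki le_ij).
by case: ifP; rewrite ?lexx ?ler01.
Qed.

(* A function affine on every cone is the Lovasz extension of its own values
   at the vertices [1_A]. *)
Lemma is_lovaszE (L : vec -> R) : is_lovasz L <-> piecewise_affine L.
Proof.
split=> [[psi L_psi] s|L_aff].
  by have [a [c [L_s _]]] := L_psi s; exists a, c.
exists (fun B => L (ind B)) => s; have [a [c L_s]] := L_aff s.
by exists a, c; split=> // k _; rewrite L_s //; apply: in_sigma_ind_Aup.
Qed.

Lemma piecewise_affine_scale (L : vec -> R) (t : R) (v : vec) :
  piecewise_affine L -> 0 <= t ->
  L (scalev t v) - L zerov = t * (L v - L zerov).
Proof.
move=> L_aff t_ge0; have [s v_s] := exists_sorting_perm v.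
have [a [c L_s]] := L_aff s.
have tv_s : in_sigma s (scalev t v) by move=> i j /v_s; exact: ler_wpM2l.
have zero_s : in_sigma s (zerov : vec) by move=> i j _; exact: lexx.
rewrite !L_s //.
have -> : \sum_(i < n) a i * (zerov : vec) i = 0 by rewrite big1 // => i _; rewrite mulr0.
rewrite addr0 !(addrC c) !addrK mulr_sumr.
by apply: eq_bigr => i _; rewrite mulrCA.
Qed.

Lemma is_lovasz_scale (L : vec -> R) (r : R) :
  is_lovasz L -> 0 <= r -> is_lovasz (fun x => L (scalev r x)).
Proof.
move=> /is_lovaszE L_aff r_ge0; apply/is_lovaszE => s; have [a [c L_s]] := L_aff s.
exists (fun i => a i * r), c => x x_s; rewrite L_s => [|i j /x_s]; last exact: ler_wpM2l.
by congr (_ + _); apply: eq_bigr => i _; rewrite /scalev mulrA.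
Qed.

Lemma affine_on_sum (s : 'S_n) (r : seq {set 'I_n}) (m : {set 'I_n} -> R)
    (g : {set 'I_n} -> vec -> R) :
  (forall A, affine_on s (g A)) -> affine_on s (fun x => \sum_(A <- r) m A * g A x).
Proof.
move=> g_aff; elim: r => [|A r [a [c IH]]].
  exists (fun=> 0), 0 => x _.
  by rewrite big_nil big1 ?addr0 // => i _; rewrite mul0r.
have [a1 [c1 gA_s]] := g_aff A.
exists (fun i => m A * a1 i + a i), (m A * c1 + c) => x x_s.
rewrite big_cons gA_s // IH // mulrDr mulr_sumr.
under [\sum_(i < n) (_ + _) * _]eq_bigr do rewrite mulrDl -mulrA.
by rewrite big_split /= addrACA !addrA.
Qed.

Definition min_over (D : {set 'I_n}) (x : vec) : R :=
  if [pick i in D] is Some j then \big[Num.min/x j]_(i in D) x i else 0.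

Lemma min_overE (D : {set 'I_n}) (x : vec) j :
  j \in D -> (forall i, i \in D -> x j <= x i) -> min_over D x = x j.
Proof.
move=> Dj j_min; rewrite /min_over; case: pickP => [k Dk|/(_ j)]; last by rewrite Dj.
apply/eqP; rewrite eq_le; apply/andP; split; first by rewrite (bigD1 j) //= ge_min lexx.
apply: (big_ind (fun v => x j <= v)) => [|u v ? ?|i /j_min //]; first exact: j_min Dk.
by rewrite le_min; apply/andP.
Qed.

(* The dual of the unanimity function [min_{i \in A} x_i]: at the points [-1_B]
   these form a triangular family for inclusion, which [comobius] inverts. *)
Definition dual_unanimity (A : {set 'I_n}) (x : vec) : R :=
  if A == setT then 1 else 1 + min_over (~: A) x.

Lemma exists_in_setC (A : {set 'I_n}) : A != setT -> exists i, i \in ~: A.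
Proof.
by rewrite -subTset => /subsetPn [i _ Ai]; exists i; rewrite inE.
Qed.

Lemma dual_unanimity_affine (A : {set 'I_n}) s : affine_on s (dual_unanimity A).
Proof.
rewrite /dual_unanimity; case: eqP => [_|/eqP A_neqT].
  by exists (fun=> 0), 1 => x _; rewrite big1 ?addr0 // => i _; rewrite mul0r.
have [i0 CAi0] := exists_in_setC A_neqT.
have [j CAj j_first] := arg_minnP (fun i => (s^-1)%g i : nat) CAi0.
exists (fun i => (i == j)%:R), 1 => x x_s.
rewrite (@min_overE _ _ j) => [|//|i /j_first]; last by move/x_s; rewrite !permKV.
by rewrite (bigD1 j) //= eqxx mul1r big1 ?addr0 // => i /negbTE ->; rewrite mul0r.
Qed.

Lemma dual_unanimity_negind (A B : {set 'I_n}) :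
  dual_unanimity A (negind B) = (B \subset A)%:R.
Proof.
rewrite /dual_unanimity; case: eqP => [->|/eqP A_neqT]; first by rewrite subsetT.
have [i0 CAi0] := exists_in_setC A_neqT.
have [BA|/subsetPn [i Bi Ai]] := boolP (B \subset A).
  have notB i : i \in ~: A -> i \notin B by rewrite inE; apply: contra => /(subsetP BA).
  rewrite (@min_overE _ _ i0) // => [|i CAi].
    by rewrite /negind /ind (negbTE (notB _ CAi0)) oppr0 addr0.
  by rewrite /negind /ind !ifN ?notB.
rewrite (@min_overE _ _ i) ?inE // => [|k _]; first by rewrite /negind /ind Bi addrN.
by rewrite /negind /ind Bi; case: ifP; rewrite ?lexx // oppr0 lerN10.
Qed.

(* [comobius psi k A] is the truncation at depth [k] of the recursion
   [m(A) = psi(A) - sum_{C \proper A} m(C)]; it stabilises once [k >= n - #|A|]. *)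
Fixpoint comobius (psi : {set 'I_n} -> R) k A : R :=
  if k is k'.+1 then psi A - \sum_(C : {set 'I_n} | A \proper C) comobius psi k' C
  else psi A.

Lemma comobius_stable psi k (A : {set 'I_n}) :
  (n - #|A| <= k)%N -> comobius psi k.+1 A = comobius psi k A.
Proof.
elim: k A => [|k IH] A le_k /=.
  rewrite big_pred0 ?subr0 // => C; apply/negbTE/negP => /proper_card ltAC.
  move: le_k (max_card C); rewrite card_ord leqn0 subn_eq0 => le_nA.
  by rewrite leqNgt (leq_ltn_trans le_nA ltAC).
congr (_ - _); apply: eq_bigr => C /proper_card ltAC; apply: IH.
by apply: leq_trans (leq_sub2l n ltAC) _; rewrite subnS; case: (n - #|A|)%N le_k.
Qed.

Lemma comobius_sum psi (B : {set 'I_n}) :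
  \sum_(A : {set 'I_n} | B \subset A) comobius psi n A = psi B.
Proof.
rewrite (bigD1 B) ?subxx //= -comobius_stable ?leq_subr //=.
suff -> : \sum_(A : {set 'I_n} | (B \subset A) && (A != B)) comobius psi n A =
          \sum_(A : {set 'I_n} | B \proper A) comobius psi n A by rewrite subrK.
by apply: eq_bigl => A; rewrite properEneq eq_sym andbC.
Qed.

Lemma exists_lovasz_negind (psi : {set 'I_n} -> R) :
  exists L, is_lovasz L /\ forall B, L (negind B) = psi B.
Proof.
exists (fun x => \sum_A comobius psi n A * dual_unanimity A x); split.
  by apply/is_lovaszE => s; apply: affine_on_sum => A; exact: dual_unanimity_affine.
move=> B; rewrite -comobius_sum [RHS]big_mkcond; apply: eq_bigr => A _.
by rewrite dual_unanimity_negind; case: ifP; rewrite ?mulr1 ?mulr0.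
Qed.

End LovaszExtension.

Section NonpositiveDomain.
Variables (R : realFieldType) (n : nat) (I : R -> Prop).
Hypotheses (I0 : I 0) (Im1 : I (-1)) (I_le0 : forall x : R, I x -> x <= 0).
Local Notation vec := (vec R n).

Lemma in_In_negind (A : {set 'I_n}) : in_In I (negind A : vec).
Proof. by move=> i; rewrite /negind /ind; case: ifP; rewrite ?oppr0. Qed.

Lemma in_In_scale_ind t (A : {set 'I_n}) : I t -> in_In I (scalev t (ind A) : vec).
Proof. by move=> It i; rewrite /scalev /ind; case: ifP; rewrite ?mulr1 ?mulr0. Qed.

Lemma in_In_vmin (x y : vec) : in_In I x -> in_In I y -> in_In I (vmin x y).
Proof. by move=> Ix Iy i; rewrite /vmin; case: lerP. Qed.

Lemma in_In_vmax (x y : vec) : in_In I x -> in_In I y -> in_In I (vmax x y).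
Proof. by move=> Ix Iy i; rewrite /vmax; case: lerP. Qed.

Lemma negind0 : negind set0 = zerov :> vec.
Proof. by apply: functional_extensionality => i; rewrite /negind /ind inE oppr0. Qed.

Lemma negindE (A : {set 'I_n}) : negind A = scalev (-1) (ind A) :> vec.
Proof. by apply: functional_extensionality => i; rewrite /scalev /negind mulN1r. Qed.

Lemma scalev_ind_negind t (A : {set 'I_n}) : scalev t (ind A) = scalev (- t) (negind A) :> vec.
Proof. by apply: functional_extensionality => i; rewrite /scalev /negind mulrNN. Qed.

Lemma compv_scalev_ind phi t (A : {set 'I_n}) : phi 0 = 0 ->
  compv phi (scalev t (ind A)) = scalev (phi t) (ind A) :> vec.
Proof.
move=> phi0; apply: functional_extensionality => i; rewrite /compv /scalev /ind.
by case: ifP; rewrite ?mulr1 ?mulr0.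
Qed.

Lemma compv_zerov phi : phi 0 = 0 -> compv phi zerov = zerov :> vec.
Proof. by move=> phi0; apply: functional_extensionality => i; rewrite /compv /zerov. Qed.

Lemma lovasz_scale_ind (L : vec -> R) t (A : {set 'I_n}) : is_lovasz L -> t <= 0 ->
  L (scalev t (ind A)) = L zerov - t * (L (negind A) - L zerov).
Proof.
move=> /is_lovaszE L_aff t_le0; rewrite scalev_ind_negind -mulNr.
by rewrite -piecewise_affine_scale ?oppr_ge0 // addrC subrK.
Qed.

Lemma nondecr_min phi a b : nondecr_on I phi -> I a -> I b ->
  phi (Num.min a b) = Num.min (phi a) (phi b).
Proof.
move=> phi_mono Ia Ib; case: (lerP a b) => [le_ab|/ltW le_ba].
  by apply/esym/min_idPl; apply: phi_mono.
by apply/esym/min_idPr; apply: phi_mono.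
Qed.

Lemma nondecr_max phi a b : nondecr_on I phi -> I a -> I b ->
  phi (Num.max a b) = Num.max (phi a) (phi b).
Proof.
move=> phi_mono Ia Ib; case: (lerP a b) => [le_ab|/ltW le_ba].
  by apply/esym/max_idPr; apply: phi_mono.
by apply/esym/max_idPl; apply: phi_mono.
Qed.

Lemma lovasz_modular_on_cone (L : vec -> R) (s : 'S_n) (u v : vec) : is_lovasz L ->
  in_sigma s u -> in_sigma s v -> L u + L v = L (vmin u v) + L (vmax u v).
Proof.
move=> /is_lovaszE L_aff u_s v_s; have [a [c L_s]] := L_aff s.
have min_s : in_sigma s (vmin u v).
  by move=> i j le_ij; rewrite le_min !ge_min (u_s _ _ le_ij) (v_s _ _ le_ij) orbT.
have max_s : in_sigma s (vmax u v).
  by move=> i j le_ij; rewrite ge_max !le_max (u_s _ _ le_ij) (v_s _ _ le_ij) orbT.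
rewrite !L_s // addrACA [RHS]addrACA -!big_split /=; congr (_ + _).
by apply: eq_bigr => i _; rewrite -!mulrDr addr_min_max.
Qed.

Lemma comon_modular_lovasz_comp (L : vec -> R) phi : is_lovasz L -> nondecr_on I phi ->
  comon_modular I (fun x => L (compv phi x)).
Proof.
move=> L_lov phi_mono x y [Ix [Iy [s [x_s y_s]]]].
have phi_s z : in_In I z -> in_sigma s z -> in_sigma s (compv phi z).
  by move=> Iz; apply: in_sigma_compv => i j; apply: phi_mono.
have -> : compv phi (vmin x y) = vmin (compv phi x) (compv phi y).
  by apply: functional_extensionality => i; rewrite /compv /vmin nondecr_min.
have -> : compv phi (vmax x y) = vmax (compv phi x) (compv phi y).
  by apply: functional_extensionality => i; rewrite /compv /vmax nondecr_max.
exact: lovasz_modular_on_cone (phi_s _ Ix x_s) (phi_s _ Iy y_s).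
Qed.

(* For [c <= 0], the vectors [x \/ c] and [[x]^c] are comonotonic with meet [x] and
   join [[x]^c \/ c]. *)
Lemma comon_modular_inv_hmaxdiff (f : vec -> R) : comon_modular I f -> inv_hmaxdiff I f.
Proof.
move=> f_mod x c Ix Ic; have [s x_s] := exists_sorting_perm x.
have c_le0 := I_le0 Ic.
have comon : comonotonic I (maxc x c) (cut c x).
  split; [|split]; first by move=> i; rewrite /maxc; case: lerP.
    by move=> i; rewrite /cut; case: ifP.
  exists s; split.
    apply: (in_sigma_compv (G := fun v => Num.max v c)) x_s => i j le_ij.
    by rewrite ge_max !le_max le_ij lexx orbT.
  apply: (in_sigma_compv (G := fun v => if c <= v then 0 else v)) x_s => i j le_ij.
  have [le_cj|lt_jc] := boolP (c <= x j); first by case: ifP => // _; exact: I_le0.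
  by rewrite ifN //; apply: contra lt_jc => /le_trans; apply.
have meet : vmin (maxc x c) (cut c x) = x.
  apply: functional_extensionality => i; rewrite /vmin /maxc /cut.
  by case: (lerP c (x i)) => [_|/ltW le_ic]; [apply/min_idPl/I_le0 | apply/min_idPr].
have join : vmax (maxc x c) (cut c x) = maxc (cut c x) c.
  apply: functional_extensionality => i; rewrite /vmax /maxc /cut.
  case: (lerP c (x i)) => _; last exact: maxC.
  by rewrite (max_idPr (I_le0 (Ix i))) (max_idPl c_le0).
have := f_mod _ _ comon; rewrite meet join => eq_mod.
by apply/eqP; rewrite subr_eq addrAC [f (cut c x) + _]addrC eq_mod addrK.
Qed.

Definition supp (x : vec) : {set 'I_n} := [set i | x i != 0].

Lemma maxc_supp (x : vec) c : c <= 0 -> (forall i, x i != 0 -> x i <= c) ->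
  maxc x c = scalev c (ind (supp x)).
Proof.
move=> c_le0 le_c; apply: functional_extensionality => i.
rewrite /maxc /scalev /ind inE; have [xi0|/le_c le_xic] := eqVneq (x i) 0.
  by rewrite xi0 mulr0; apply/max_idPl.
by rewrite mulr1; apply/max_idPr.
Qed.

Lemma maxc_cut (x : vec) c : c <= 0 -> maxc (cut c x) c = scalev c (ind [set i | x i < c]).
Proof.
move=> c_le0; apply: functional_extensionality => i.
rewrite /maxc /cut /scalev /ind inE ltNge; case: ifP => [_|/negbT] /=.
  by rewrite mulr0; apply/max_idPl.
by rewrite -ltNge mulr1 => /ltW; apply/max_idPr.
Qed.

Lemma supp_cut_proper (x : vec) j : x j != 0 -> supp (cut (x j) x) \proper supp x.
Proof.
move=> xj0; apply/properP; split; last by exists j; rewrite /supp !inE /cut ?lexx ?eqxx.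
by apply/subsetP => i; rewrite /supp !inE /cut; case: ifP; rewrite ?eqxx.
Qed.

Lemma in_In_cut (x : vec) c : in_In I x -> in_In I (cut c x).
Proof. by move=> Ix i; rewrite /cut; case: ifP. Qed.

(* Induction on the support: cutting [x] at its largest nonzero entry [t] changes
   [h] by a difference of two values at points [t 1_A]. *)
Lemma inv_hmaxdiff_eq0 (h : vec -> R) : inv_hmaxdiff I h ->
  (forall t A, I t -> h (scalev t (ind A)) = 0) -> forall x, in_In I x -> h x = 0.
Proof.
move=> h_inv h_ind x; have [N] := ubnP #|supp x|; elim: N x => // N IH x lt_N Ix.
have [supp0|[j0 Sj0]] := set_0Vmem (supp x).
  suff -> : x = scalev 0 (ind set0) by exact: h_ind.
  apply: functional_extensionality => i; rewrite /scalev mul0r.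
  have : i \notin supp x by rewrite supp0 inE.
  by rewrite /supp inE negbK => /eqP.
have [j Sj j_max] := arg_maxP (fun i => x i) Sj0.
have xj0 : x j != 0 by move: (Sj : j \in supp x); rewrite /supp inE.
have xj_lt0 : x j < 0 by rewrite lt_def eq_sym xj0 (I_le0 (Ix j)).
have := h_inv x (x j) Ix (Ix j).
rewrite maxc_supp ?maxc_cut ?ltW // => [|i xi0]; last first.
  by apply: j_max; change (i \in supp x); rewrite /supp inE.
rewrite !h_ind ?subr0 // => ->; apply: IH (in_In_cut _ Ix).
by rewrite -ltnS; apply: leq_trans (proper_card (supp_cut_proper xj0)) lt_N.
Qed.

Lemma inv_hmaxdiffB (f g : vec -> R) : inv_hmaxdiff I f -> inv_hmaxdiff I g ->
  inv_hmaxdiff I (fun x => f x - g x).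
Proof.
move=> f_inv g_inv x c Ix Ic.
have swap (a b c' d : R) : (a - b) - (c' - d) = (a - c') - (b - d).
  by rewrite !opprD !opprK addrACA.
by rewrite swap f_inv // g_inv // -swap.
Qed.

Variable f : vec -> R.

Lemma exists_zeroed_negind_neq0 : nonconstant_on I f ->
  inv_hmaxdiff I f -> weakly_homogeneous I (zeroed f) ->
  exists A, zeroed f (negind A) <> 0.
Proof.
move=> [x [y [Ix [Iy fx_neq_fy]]]] f_inv [phi [_ [_ f_hom]]].
case: (boolP [exists A, zeroed f (negind A) != 0]) => [/existsP [A /eqP]|]; first by exists A.
move=> /existsPn zeroed_negind0; exfalso; apply: fx_neq_fy.
have zeroed_inv : inv_hmaxdiff I (zeroed f) by apply: inv_hmaxdiffB => // ????; rewrite !subrr.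
have zeroed0 := inv_hmaxdiff_eq0 zeroed_inv.
have {}zeroed0 z : in_In I z -> f z = f zerov.
  move=> Iz; apply/subr0_eq/zeroed0 => // t A It.
  by rewrite f_hom // (eqP (negPn (zeroed_negind0 A))) mulr0.
by rewrite !zeroed0.
Qed.

Lemma lovasz_comp_modular_homogeneous (L : vec -> R) phi :
  is_lovasz L -> (forall A, L (negind A) = f (negind A)) ->
  nondecr_on I phi -> phi 0 = 0 -> (forall x, in_In I x -> f x = L (compv phi x)) ->
  comon_modular I f /\ weakly_homogeneous I (zeroed f).
Proof.
move=> L_lov L_negind phi_mono phi0 f_rep.
have f0 : f zerov = L zerov by rewrite f_rep // compv_zerov.
split=> [x y xy_comon|].
  have [Ix [Iy _]] := xy_comon.
  have Imin := in_In_vmin Ix Iy; have Imax := in_In_vmax Ix Iy.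
  rewrite !f_rep //.
  exact: comon_modular_lovasz_comp xy_comon.
exists phi; split=> //; split=> // t A It.
have phit_le0 : phi t <= 0 by rewrite -phi0; apply: phi_mono; rewrite ?I_le0.
rewrite /zeroed f_rep; last exact: in_In_scale_ind.
rewrite compv_scalev_ind // lovasz_scale_ind //.
by rewrite f0 L_negind addrC addKr mulNr.
Qed.

Lemma quasi_lovasz_normalize : quasi_lovasz I f -> (exists A, zeroed f (negind A) <> 0) ->
  exists phi : R -> R, nondecr_on I phi /\ phi 0 = 0 /\ phi (-1) = -1 /\
    exists L : vec -> R, is_lovasz L /\ (forall A, L (negind A) = f (negind A)) /\
      forall x, in_In I x -> f x = L (compv phi x).
Proof.
move=> [L [phi [L_lov [phi_mono [phi0 f_rep]]]]] [A fA_neq0].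
have phim1_le0 : phi (-1) <= 0 by rewrite -phi0; apply: phi_mono; rewrite ?lerN10.
have f_negind B : f (negind B) = L zerov - phi (-1) * (L (negind B) - L zerov).
  rewrite f_rep; last exact: in_In_negind.
  by rewrite [in LHS]negindE compv_scalev_ind // lovasz_scale_ind.
have f0 : f zerov = L zerov by rewrite f_rep // compv_zerov.
pose r := - phi (-1).
have r_gt0 : 0 < r.
  rewrite oppr_gt0 lt_def phim1_le0 andbT eq_sym.
  by apply/eqP => phim1_0; apply: fA_neq0; rewrite /zeroed f_negind f0 phim1_0 mul0r subr0 subrr.
exists (fun v => phi v / r); split; [|split; [|split]].
- by move=> a b Ia Ib le_ab; rewrite ler_pM2r ?invr_gt0 //; apply: phi_mono.
- by rewrite phi0 mul0r.
- by rewrite -[phi (-1)]opprK mulNr divff ?gt_eqF.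
exists (fun v => L (scalev r v)); split; [|split].
- exact: is_lovasz_scale (ltW r_gt0).
- move=> B; rewrite f_rep; last exact: in_In_negind.
  by rewrite [in RHS]negindE compv_scalev_ind // scalev_ind_negind.
- move=> x Ix; rewrite f_rep //; congr L; apply: functional_extensionality => i.
  by rewrite /scalev /compv mulrC divfK ?gt_eqF.
Qed.

Lemma inv_hmaxdiff_lovasz_rep : nonconstant_on I f ->
  inv_hmaxdiff I f -> weakly_homogeneous I (zeroed f) ->
  exists phi : R -> R, nondecr_on I phi /\ phi 0 = 0 /\ phi (-1) = -1 /\
    exists L : vec -> R, is_lovasz L /\ (forall A, L (negind A) = f (negind A)) /\
      forall x, in_In I x -> f x = L (compv phi x).
Proof.
move=> f_ncst f_inv f_hom; have [A fA_neq0] := exists_zeroed_negind_neq0 f_ncst f_inv f_hom.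
have [phi [phi_mono [phi0 f_scale]]] := f_hom.
have phim1 : phi (-1) = -1.
  have := f_scale (-1) A Im1; rewrite -negindE => fA_eq.
  by apply/oppr_inj/(mulIf (introN eqP fA_neq0)); rewrite -fA_eq opprK mul1r.
have [L [L_lov L_negind]] := exists_lovasz_negind (fun B => f (negind B)).
have L0 : L zerov = f zerov by rewrite -negind0 L_negind.
exists phi; do 3!split=> //; exists L; do 2!split=> //.
move=> x Ix; apply/subr0_eq; move: x Ix.
apply: inv_hmaxdiff_eq0 (inv_hmaxdiffB f_inv _) _.
  exact/comon_modular_inv_hmaxdiff/comon_modular_lovasz_comp.
move=> t B It; have phit_le0 : phi t <= 0 by rewrite -phi0; apply: phi_mono; rewrite ?I_le0.
have := f_scale t B It; rewrite /zeroed => fB_eq.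
rewrite compv_scalev_ind // (lovasz_scale_ind B L_lov) // L0 L_negind.
by rewrite -[f (scalev t _)](subrK (f zerov)) fB_eq mulNr opprB addrACA addNr subrr addr0.
Qed.

End NonpositiveDomain.

Theorem theorem16 (R : realFieldType) (n : nat) (I : R -> Prop)
  (f : vec R n -> R)
  (hI : is_interval I)
  (hI1 : forall x : R, -1 <= x -> x <= 0 -> I x)
  (hI2 : forall x : R, I x -> x <= 0)
  (hf : nonconstant_on I f) :
  let i_ := quasi_lovasz I f /\
            exists A : {set 'I_n}, zeroed f (negind A) <> 0 in
  let ii_ := comon_modular I f /\ weakly_homogeneous I (zeroed f) in
  let ii'_ := inv_hmaxdiff I f /\ weakly_homogeneous I (zeroed f) in
  let iii_ := exists phi : R -> R,
      nondecr_on I phi /\ phi 0 = 0 /\ phi (-1) = -1 /\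
      exists L : vec R n -> R,
        is_lovasz L /\ (forall A : {set 'I_n}, L (negind A) = f (negind A)) /\
        forall x, in_In I x -> f x = L (compv phi x) in
  (i_ <-> ii_) /\ (i_ <-> ii'_) /\ (i_ <-> iii_).
Proof.
have I0 : I 0 by apply: hI1; rewrite ?lerN10.
have Im1 : I (-1) by apply: hI1; rewrite ?lerN10.
move=> i_ ii_ ii'_ iii_.
have i_iii : i_ -> iii_ by move=> [ql nz]; exact: (quasi_lovasz_normalize I0 Im1 ql nz).
have ii'_iii : ii'_ -> iii_.
  by move=> [f_inv f_hom]; exact: (inv_hmaxdiff_lovasz_rep I0 Im1 hI2 hf f_inv f_hom).
have iii_ii : iii_ -> ii_.
  case=> phi [phi_mono [phi0 [_ [L [L_lov [L_negind f_rep]]]]]].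
  exact: (lovasz_comp_modular_homogeneous I0 hI2 L_lov L_negind phi_mono phi0 f_rep).
have ii_ii' : ii_ -> ii'_.
  by case=> f_mod f_hom; split=> //; exact: (comon_modular_inv_hmaxdiff I0 hI2 f_mod).
have iii_i : iii_ -> i_.
  move=> rep; have [f_inv f_hom] := ii_ii' (iii_ii rep); split.
    by have [phi [phi_mono [phi0 [_ [L [L_lov [_ f_rep]]]]]]] := rep; exists L, phi.
  exact: (exists_zeroed_negind_neq0 I0 hI2 hf f_inv f_hom).
tauto.
Qed.
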